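(* Let $f(x)=\sum_{n\ge 1} a_n \frac{x^n}{n!}$ be a formal power series with complex coefficients and $a_1\ne0$, and put $q:=a_1$. For all integers $s\ge 0$ and $n\ge k\ge 0$, \[ \begin{bmatrix} n\\ k\end{bmatrix}_{\phi^s}=\sum_{p=0}^{\min(s,n-k)}\ \sum_{k=j_0<j_1<\cdots<j_p=n} h_{s-p}\big(q^{j_0},\dots,q^{j_p}\big)\prod_{i=0}^{p-1}\begin{bmatrix} j_{i+1}\\ j_i\end{bmatrix}_{\phi}, \] where the inner sum is over strictly increasing integer tuples with $j_0=k$ and $j_p=n$, and \[ h_{s-p}(q^{j_0},\dots,q^{j_p})=\sum_{\substack{\lambda_0+\cdots+\lambda_p=s-p\\ \lambda_i\ge 0}} q^{j_0\lambda_0+\cdots+j_p\lambda_p}. \]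
   Context: For an integer $s\ge 0$, $f^s$ denotes the $s$-fold compositional iterate of $f$, with $f^0(x)=x$. For integers $n\ge k\ge 0$, $\begin{bmatrix} n\\ k\end{bmatrix}_{\phi^s}$ is defined by $\frac{f^s(x)^k}{k!}=\sum_{n\ge k}\begin{bmatrix} n\\ k\end{bmatrix}_{\phi^s}\frac{x^n}{n!}$, and $\begin{bmatrix} n\\ k\end{bmatrix}_{\phi}:=\begin{bmatrix} n\\ k\end{bmatrix}_{\phi^1}$ (the exponential partial Bell polynomial $B_{n,k}(a_1,\dots,a_{n-k+1})$). $h_m(x_0,\dots,x_p)$ denotes the complete homogeneous symmetric polynomial of degree $m$ in $x_0,\dots,x_p$. *)

From mathcomp Require Import all_boot all_order all_algebra.
From mathcomp Require Import reals.
From mathcomp Require Export complex.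
Set Implicit Arguments. Unset Strict Implicit. Unset Printing Implicit Defensive.
Import Order.TTheory GRing.Theory Num.Theory.
Local Open Scope ring_scope.

(* Formal power series over a commutative ring, as ordinary coefficient
   sequences: u n is the coefficient of x^n. *)
Section Series.
Variable K : comRingType.

Definition series := nat -> K.

Definition sone : series := fun n => (n == 0)%:R.
Definition sid : series := fun n => (n == 1)%:R.
Definition smul (u v : series) : series :=
  fun n => \sum_(i < n.+1) u i * v (n - i)%N.
Definition spow (u : series) (k : nat) : series := iter k (smul u) sone.
(* composition g(f(x)), meaningful when f 0 = 0 *)
Definition scomp (g f : series) : series :=
  fun n => \sum_(k < n.+1) g k * spow f k n.
End Series.

Section Bell.
Variable K : fieldType.

(* f(x) = sum_{n>=1} a_n x^n / n! : ordinary coefficients (a_0 is ignored) *)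
Definition fser (a : nat -> K) : series K :=
  fun n => if n == 0%N then 0 else a n / (n`!)%:R.

Definition fiter (a : nat -> K) (s : nat) : series K :=
  iter s (fun g => scomp (fser a) g) (sid K).

(* [n k]_{phi^s} : f^s(x)^k / k! = sum_n [n k]_{phi^s} x^n / n! *)
Definition bellphi (a : nat -> K) (s n k : nat) : K :=
  (n`!)%:R * spow (fiter a s) k n / (k`!)%:R.
End Bell.

From mathcomp Require Import all_boot all_order all_algebra.
From mathcomp Require Import zify ring.
From mathcomp Require Import reals complex.
Import Order.TTheory GRing.Theory Num.Theory.
Set Implicit Arguments. Unset Strict Implicit. Unset Printing Implicit Defensive.
Local Open Scope ring_scope.

(* Since f^(s+1)(x)^k = (f^k)(f^s(x)), the Bell matrices B_s = ([n k]_{phi^s})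
   satisfy B_(s+1) = B_s B_1, and B_1 = D + N is lower triangular with
   D = diag(q^k).  The formula is the expansion of (D + N)^s: a word with p
   letters N and s - p letters D contributes along a chain
   k = j_0 < ... < j_p = n the product of the N-entries times
   q^(j_0 lam_0 + ... + j_p lam_p), lam_i being the number of D's applied at
   level j_i. *)

Definition fcons (A : finType) p (x : A) (g : {ffun 'I_p -> A}) : {ffun 'I_p.+1 -> A} :=
  [ffun i : 'I_p.+1 => if unlift ord0 i is Some j then g j else x].

Lemma fcons0 (A : finType) p (x : A) (g : {ffun 'I_p -> A}) : fcons x g ord0 = x.
Proof. by rewrite ffunE unlift_none. Qed.

Lemma fconsL (A : finType) p (x : A) (g : {ffun 'I_p -> A}) i :
  fcons x g (lift ord0 i) = g i.
Proof. by rewrite ffunE liftK. Qed.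

Definition increasing p N (j : {ffun 'I_p -> 'I_N}) :=
  [forall i1 : 'I_p, forall i2 : 'I_p, (i1 < i2)%N ==> (j i1 < j i2)%N].

Lemma increasing_ord1 N (j : {ffun 'I_1 -> 'I_N}) : increasing j.
Proof. by apply/forallP => -[[|?] ?] //; apply/forallP => -[[|?] ?]. Qed.

Lemma increasing_fcons p N (x : 'I_N) (g : {ffun 'I_p.+1 -> 'I_N}) :
  increasing (fcons x g) = (x < g ord0)%N && increasing g.
Proof.
apply/idP/andP => [/forallP incr_xg | [lt_xg /forallP incr_g]].
  split.
    by have /forallP/(_ (lift ord0 ord0)) := incr_xg ord0; rewrite fcons0 fconsL; apply.
  apply/forallP => i1; apply/forallP => i2; apply/implyP => lt_i12.
  by have /forallP/(_ (lift ord0 i2))/implyP := incr_xg (lift ord0 i1); rewrite !fconsL; apply.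
have g0_min j : (g ord0 <= g j)%N.
  case: (unliftP ord0 j) => [j' ->|->] //.
  by apply: ltnW; have /forallP/(_ (lift ord0 j'))/implyP := incr_g ord0; apply.
apply/forallP => i1; apply/forallP => i2; apply/implyP.
case: (unliftP ord0 i1) => [j1 ->|->]; case: (unliftP ord0 i2) => [j2 ->|->] //=.
  rewrite !fconsL /bump /= !add1n ltnS => lt_j12.
  by have /forallP/(_ j2)/implyP := incr_g j1; apply.
by rewrite fcons0 fconsL => _; apply: leq_trans lt_xg (g0_min j2).
Qed.

Section BigSums.
Variable V : nmodType.

Lemma sum_ord_trunc n m (F : nat -> V) : (n <= m)%N ->
  (forall k, (n <= k < m)%N -> F k = 0) ->
  \sum_(k < m) F k = \sum_(k < n) F k.
Proof.
move=> le_nm F0; rewrite -!(big_mkord xpredT) (big_cat_nat (leq0n n) le_nm) /=.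
by rewrite [X in _ + X]big1_seq ?addr0 // => k /andP[_]; rewrite mem_index_iota; apply: F0.
Qed.

Lemma sum_ord_nat1 n k (F : 'I_n.+1 -> V) :
  (forall i : 'I_n.+1, nat_of_ord i != k -> F i = 0) ->
  \sum_i F i = if (k < n.+1)%N then F (inord k) else 0.
Proof.
move=> F0; case: ifP => lt_kn.
  rewrite (bigD1 (inord k)) //= big1 ?addr0 // => i ne_ik; apply: F0.
  by apply: contra ne_ik => /eqP ik; apply/eqP/val_inj; rewrite /= inordK.
by rewrite big1 // => i _; apply: F0; apply: contraFneq lt_kn => <-.
Qed.

Lemma sum_ffunS (A : finType) p (F : {ffun 'I_p.+1 -> A} -> V) :
  \sum_f F f = \sum_(x : A) \sum_(g : {ffun 'I_p -> A}) F (fcons x g).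
Proof.
rewrite pair_bigA /= (reindex (fun xg : A * {ffun 'I_p -> A} => fcons xg.1 xg.2)) //.
apply: onW_bij; exists (fun f : {ffun 'I_p.+1 -> A} => (f ord0, [ffun i => f (lift ord0 i)])).
  by case=> x g /=; rewrite fcons0; congr pair; apply/ffunP => i; rewrite ffunE fconsL.
move=> f; apply/ffunP => i; rewrite ffunE.
by case: (unliftP ord0 i) => [j ->|->] //; rewrite ffunE.
Qed.

Lemma sum_ffun_ord0 (A : finType) (F : {ffun 'I_0 -> A} -> V) g0 : \sum_g F g = F g0.
Proof. by apply: big_pred1 => g /=; apply/esym/eqP/ffunP => -[]. Qed.

End BigSums.

Section TruncatedSeries.
Variable K : comNzRingType.

Definition agree N (u : series K) (P : {poly K}) := forall i, (i <= N)%N -> u i = P`_i.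

Lemma agree_poly N (u : series K) : agree N u (\poly_(i < N.+1) u i).
Proof. by move=> i le_iN; rewrite coef_poly ltnS le_iN. Qed.

Lemma agree_mul N u v P Q : agree N u P -> agree N v Q -> agree N (smul u v) (P * Q).
Proof.
move=> uP vQ i le_iN; rewrite /smul coefM; apply: eq_bigr => j _.
rewrite uP ?vQ //; apply: leq_trans le_iN; first exact: leq_subr.
by rewrite -ltnS.
Qed.

Lemma agree_pow N u P k : agree N u P -> agree N (spow u k) (P ^+ k).
Proof.
move=> uP; elim: k => [|k IH]; first by move=> i _; rewrite expr0 coef1.
by rewrite exprS; apply: agree_mul.
Qed.

Lemma spow_eq0 (u : series K) k m : u 0%N = 0 -> (m < k)%N -> spow u k m = 0.
Proof.
move=> u0; elim: k m => [|k IH] m // lt_mk.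
rewrite /spow iterS -/(spow u k) /smul big1 // => -[[|i] lt_im] _ /=.
  by rewrite u0 mul0r.
by rewrite IH ?mulr0 //; rewrite ltnS in lt_im; lia.
Qed.

Lemma agree_comp N g f G F : f 0%N = 0 -> agree N g G -> agree N f F ->
  agree N (scomp g f) (G \Po F).
Proof.
move=> f0 gG fF i le_iN; rewrite /scomp coef_comp_poly.
pose m := minn (size G) i.+1.
rewrite (@sum_ord_trunc _ m (size G) (fun k => G`_k * (F ^+ k)`_i)) ?geq_minl //; last first.
  move=> k /andP[]; rewrite geq_min => /orP[le_Gk|lt_ik] _.
    by rewrite nth_default // mul0r.
  by rewrite -(agree_pow k fF) ?spow_eq0 ?mulr0.
rewrite (@sum_ord_trunc _ m i.+1 (fun k => g k * spow f k i)) ?geq_minr //; last first.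
  move=> k /andP[]; rewrite geq_min => /orP[le_Gk|]; last by lia.
  by move=> lt_ki; rewrite gG ?nth_default ?mul0r //; lia.
apply: eq_bigr => k _; have := ltn_ord k; rewrite leq_min => /andP[_ lt_ki].
by rewrite gG ?(agree_pow k fF) //; lia.
Qed.

Lemma spow_scomp (g f : series K) k n : f 0%N = 0 ->
  spow (scomp g f) k n = scomp (spow g k) f n.
Proof.
move=> f0; have gP := @agree_poly n g; have fP := @agree_poly n f.
rewrite (agree_pow k (agree_comp f0 gP fP)) // (agree_comp f0 (agree_pow k gP) fP) //.
by rewrite rmorphXn.
Qed.

Lemma spow_sid k n : spow (sid K) k n = (n == k)%:R.
Proof.
have idX : agree n (sid K) 'X by move=> i _; rewrite coefX.
by rewrite (agree_pow k idX) // coefXn.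
Qed.

Lemma scomp_sid (u : series K) n : scomp u (sid K) n = u n.
Proof.
rewrite /scomp (bigD1 ord_max) //= spow_sid eqxx mulr1 big1 ?addr0 // => i ne_in.
rewrite spow_sid; case: eqP => [ni|]; last by rewrite mulr0.
by case/eqP: ne_in; apply: val_inj; rewrite /= -ni.
Qed.

End TruncatedSeries.

Section BellMatrices.
Variables (K : numFieldType) (a : nat -> K).

Lemma fser0 : fser a 0%N = 0.
Proof. by rewrite /fser eqxx. Qed.

Lemma fiterS s : fiter a s.+1 = scomp (fser a) (fiter a s).
Proof. by rewrite /fiter iterS. Qed.

Lemma fiter0 s : fiter a s 0%N = 0.
Proof. by case: s => [|s] //; rewrite fiterS /scomp big_ord1 fser0 mul0r. Qed.

Lemma spow_fiter1 k m : spow (fiter a 1) k m = spow (fser a) k m.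
Proof. by rewrite fiterS spow_scomp // scomp_sid. Qed.

Lemma natr_fact_neq0 n : (n`!)%:R != 0 :> K.
Proof. by rewrite pnatr_eq0 -lt0n fact_gt0. Qed.

Lemma bellphi0 n k : bellphi a 0 n k = (n == k)%:R.
Proof.
rewrite /bellphi /= spow_sid; case: eqP => [->|_]; last by rewrite mulr0 mul0r.
by rewrite mulr1 mulfV // natr_fact_neq0.
Qed.

Lemma bellphiS s n k :
  bellphi a s.+1 n k = \sum_(m < n.+1) bellphi a s n m * bellphi a 1 m k.
Proof.
rewrite /bellphi fiterS spow_scomp ?fiter0 // /scomp mulr_sumr mulr_suml.
by apply: eq_bigr => m _; rewrite spow_fiter1; field; rewrite !natr_fact_neq0.
Qed.

Lemma bellphi1_lt m k : (m < k)%N -> bellphi a 1 m k = 0.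
Proof. by move=> lt_mk; rewrite /bellphi spow_fiter1 spow_eq0 ?fser0 // mulr0 mul0r. Qed.

Lemma spow_fser_diag k : spow (fser a) k k = a 1%N ^+ k.
Proof.
elim: k => [|k IH]; first by rewrite /spow /= /sone eqxx.
rewrite /spow iterS -/(spow _ k) /smul big_ord_recl fser0 mul0r add0r.
rewrite (bigD1 ord0) //= subSS subn0 IH big1 ?addr0; last first.
  move=> i ne_i0; rewrite spow_eq0 ?fser0 ?mulr0 //.
  have : (0 < i)%N by rewrite lt0n; apply: contra ne_i0 => /eqP i0; apply/eqP/val_inj.
  by rewrite /bump /=; have := ltn_ord i; lia.
by rewrite exprS /fser /= divr1.
Qed.

Lemma bellphi1_diag k : bellphi a 1 k k = a 1%N ^+ k.
Proof.
rewrite /bellphi spow_fiter1 spow_fser_diag mulrC mulrA mulVf ?mul1r //.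
exact: natr_fact_neq0.
Qed.

End BellMatrices.

Section ChainExpansion.
Variables (K : comNzRingType) (q : K) (T : nat -> nat -> K).

(* chain_sum p r n k is the sum, over chains k = j_0 < j_1 < ... < j_p = n and
   lam_0 + ... + lam_p = r, of q^(j_0 lam_0 + ... + j_p lam_p) times
   T j_1 j_0 * ... * T j_p j_(p-1); the recursion fixes m = j_1 and t = lam_0. *)
Fixpoint chain_sum (p r n k : nat) : K :=
  if p is p'.+1 then
    \sum_(m < n.+1 | (k < m)%N) \sum_(t < r.+1)
      q ^+ (k * t)%N * chain_sum p' (r - t)%N n m * T m k
  else (n == k)%:R * q ^+ (k * r)%N.

Lemma chain_sum_eq0 p r n k : (n < k + p)%N -> chain_sum p r n k = 0.
Proof.
elim: p r n k => [|p IH] r n k lt_n_kp /=.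
  by rewrite addn0 in lt_n_kp; rewrite (ltn_eqF lt_n_kp) mul0r.
rewrite big1 // => m lt_km; rewrite big1 // => t _.
by rewrite IH ?mulr0 ?mul0r //; have := ltn_ord m; lia.
Qed.

Lemma chain_sum_split p r n k : (0 < p + r)%N ->
  chain_sum p r n k =
    (if r is r'.+1 then q ^+ k * chain_sum p r' n k else 0)
    + (if p is p'.+1 then \sum_(m < n.+1 | (k < m)%N) chain_sum p' r n m * T m k else 0).
Proof.
case: p => [|p]; case: r => [|r] //= _.
- by rewrite addr0 mulrCA -exprD mulnS.
- by rewrite add0r; apply: eq_bigr => m _; rewrite big_ord1 muln0 expr0 mul1r subn0.
rewrite mulr_sumr -big_split /=; apply: eq_bigr => m _.
rewrite big_ord_recl /= muln0 expr0 mul1r subn0 addrC mulr_sumr; congr (_ + _).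
by apply: eq_bigr => t _; rewrite /bump /= add1n subSS mulnS exprD !mulrA.
Qed.

(* The (n, k) entry of (D + N)^s, with D = diag(q^k) and N = (T m k)_(m > k). *)
Definition dn_pow s n k := \sum_(p < s.+1) chain_sum p (s - p)%N n k.

Lemma dn_powS s n k :
  dn_pow s.+1 n k = q ^+ k * dn_pow s n k + \sum_(m < n.+1 | (k < m)%N) dn_pow s n m * T m k.
Proof.
rewrite /dn_pow.
transitivity (\sum_(p < s.+2)
   ((if (p < s.+1)%N then q ^+ k * chain_sum p (s - p)%N n k else 0)
    + (if nat_of_ord p is p'.+1 then
         \sum_(m < n.+1 | (k < m)%N) chain_sum p' (s - p')%N n m * T m k else 0))).
  apply: eq_bigr => -[p lt_ps] _ /=; rewrite chain_sum_split; last by lia.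
  congr (_ + _); last by case: p lt_ps => [|p] //= _; rewrite subSS.
  case: p lt_ps => [|p] lt_ps; first by rewrite !subn0.
  case def_r: (s.+1 - p.+1)%N => [|r]; first by rewrite ifF //; lia.
  by rewrite ifT; [congr (_ * chain_sum _ _ _ _); lia | lia].
rewrite big_split /= [X in X + _]big_ord_recr [X in _ + X]big_ord_recl /= ltnn addr0 add0r.
congr (_ + _); first by rewrite mulr_sumr; apply: eq_bigr => -[p lt_ps] _ /=; rewrite lt_ps.
by rewrite exchange_big /=; apply: eq_bigr => m _; rewrite mulr_suml.
Qed.

(* h_r(q^(x_0), ..., q^(x_p)); the parts are bounded by M only to make the
   index type finite, which is harmless as long as r < M. *)
Definition hsum p r M (x : 'I_p.+1 -> nat) : K :=
  \sum_(lam : {ffun 'I_p.+1 -> 'I_M} | (\sum_(i < p.+1) nat_of_ord (lam i))%N == r)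
     q ^+ (\sum_(i < p.+1) x i * lam i)%N.
Arguments hsum : clear implicits.

Lemma eq_hsum p r M x y : x =1 y -> hsum p r M x = hsum p r M y.
Proof.
by move=> xy; apply: eq_bigr => lam _; congr (_ ^+ _); apply: eq_bigr => i _; rewrite xy.
Qed.

Lemma hsum0 r M x : (r < M)%N -> hsum 0 r M x = q ^+ (x ord0 * r)%N.
Proof.
case: M => [//|M] lt_rM.
rewrite /hsum big_mkcond sum_ffunS /= (sum_ord_nat1 (k := r)) ?lt_rM.
  by rewrite (sum_ffun_ord0 _ [ffun => inord r]) !big_ord1 fcons0 inordK // eqxx.
move=> t ne_tr; rewrite (sum_ffun_ord0 _ [ffun => t]) !big_ord1 fcons0 ifF //.
exact/negbTE.
Qed.

Lemma hsumS p r M x : (r < M)%N ->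
  hsum p.+1 r M x =
    \sum_(t < r.+1) q ^+ (x ord0 * t)%N * hsum p (r - t)%N M (fun i => x (lift ord0 i)).
Proof.
move=> lt_rM; rewrite [LHS]/hsum big_mkcond sum_ffunS /=.
rewrite (big_ord_widen M (fun t : nat =>
  q ^+ (x ord0 * t)%N * hsum p (r - t)%N M (fun i => x (lift ord0 i)))) //.
rewrite [RHS]big_mkcond; apply: eq_bigr => t _; case: ifP => le_tr; last first.
  by rewrite big1 // => g _; rewrite big_ord_recl fcons0 ifF //; apply/eqP; lia.
rewrite /hsum mulr_sumr [RHS]big_mkcond; apply: eq_bigr => g _.
rewrite [X in X == r]big_ord_recl [X in q ^+ X]big_ord_recl !fcons0.
under eq_bigr do rewrite fconsL.
under [in X in _ ^+ X]eq_bigr do rewrite fconsL.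
have -> : ((t + \sum_(i < p.+1) g i)%N == r) = ((\sum_(i < p.+1) g i)%N == (r - t)%N).
  by apply/eqP/eqP; lia.
by case: ifP => _; rewrite ?mulr0 // exprD.
Qed.

Definition chain_prod p n (j : {ffun 'I_p.+1 -> 'I_n.+1}) : K :=
  \prod_(i < p) T (j (lift ord0 i)) (j (widen_ord (leqnSn p) i)).

Lemma chain_prod_fcons p n (x : 'I_n.+1) (g : {ffun 'I_p.+1 -> 'I_n.+1}) :
  chain_prod (fcons x g) = T (g ord0) x * chain_prod g.
Proof.
rewrite /chain_prod big_ord_recl fconsL.
have -> : widen_ord (leqnSn p.+1) ord0 = ord0 by apply: val_inj.
rewrite fcons0; congr (_ * _); apply: eq_bigr => i _.
have -> : widen_ord (leqnSn p.+1) (lift ord0 i) = lift ord0 (widen_ord (leqnSn p) i).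
  by apply: val_inj.
by rewrite !fconsL.
Qed.

Definition is_chain p n k (j : {ffun 'I_p.+1 -> 'I_n.+1}) :=
  [&& nat_of_ord (j ord0) == k, nat_of_ord (j ord_max) == n & increasing j].

Definition chain_formula p r M n k :=
  \sum_(j : {ffun 'I_p.+1 -> 'I_n.+1} | is_chain k j)
     hsum p r M (fun i => j i) * chain_prod j.

Lemma chain_formula0 r M n k : (r < M)%N -> chain_formula 0 r M n k = chain_sum 0 r n k.
Proof.
move=> lt_rM; have max0 : (ord_max : 'I_1) = ord0 by apply: val_inj.
rewrite /chain_formula /is_chain big_mkcond sum_ffunS /= (sum_ord_nat1 (k := n)).
  rewrite ltnSn (sum_ffun_ord0 _ [ffun => inord n]) increasing_ord1 max0 fcons0 inordK //.
  rewrite eqxx andbT hsum0 // fcons0 inordK // /chain_prod big_ord0 mulr1.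
  by case: eqP => [->|]; rewrite ?mul1r ?mul0r.
move=> x ne_xn; rewrite (sum_ffun_ord0 _ [ffun => x]) max0 fcons0.
by rewrite (negbTE ne_xn) andbF.
Qed.

Lemma chain_formulaS p r M n k : (r < M)%N -> (k < n.+1)%N ->
  chain_formula p.+1 r M n k =
    \sum_(m < n.+1 | (k < m)%N) \sum_(t < r.+1)
       q ^+ (k * t)%N * chain_formula p (r - t)%N M n m * T m k.
Proof.
move=> lt_rM lt_kn.
rewrite /chain_formula big_mkcond sum_ffunS (sum_ord_nat1 (k := k)); last first.
  by move=> x ne_xk; apply: big1 => g _; rewrite /is_chain fcons0 (negbTE ne_xk).
rewrite lt_kn.
transitivity (\sum_(g : {ffun 'I_p.+1 -> 'I_n.+1})
   (if [&& nat_of_ord (g ord_max) == n, (k < g ord0)%N & increasing g]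
    then \sum_(t < r.+1) q ^+ (k * t)%N * (hsum p (r - t)%N M (fun i => g i) * chain_prod g)
                          * T (g ord0) k
    else 0)).
  apply: eq_bigr => g _; rewrite /is_chain.
  have -> : (ord_max : 'I_p.+2) = lift ord0 ord_max by apply: val_inj.
  rewrite fcons0 fconsL inordK // eqxx increasing_fcons /= inordK //.
  case: ifP => // _; rewrite hsumS // chain_prod_fcons fcons0 inordK // mulr_suml.
  have tail : (fun i => nat_of_ord (fcons (inord k) g (lift ord0 i))) =1 (fun i => g i).
    by move=> i; rewrite fconsL.
  by apply: eq_bigr => t _; rewrite (eq_hsum _ _ tail); ring.
symmetry; transitivity (\sum_(m < n.+1) \sum_(g : {ffun 'I_p.+1 -> 'I_n.+1})
   (if (k < m)%N && is_chain m g
    then \sum_(t < r.+1) q ^+ (k * t)%N * (hsum p (r - t)%N M (fun i => g i) * chain_prod g)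
                          * T m k
    else 0)).
  rewrite big_mkcond; apply: eq_bigr => m _; case: ifP => lt_km /=; last by rewrite big1.
  under eq_bigr => t _ do rewrite mulr_sumr mulr_suml.
  by rewrite exchange_big /= big_mkcond; apply: eq_bigr => g _; case: ifP.
rewrite exchange_big /=; apply: eq_bigr => g _.
rewrite (sum_ord_nat1 (k := g ord0)); last first.
  by move=> m ne_mg; rewrite /is_chain eq_sym (negbTE ne_mg) andbF.
rewrite ltn_ord inordK ?ltn_ord // /is_chain eqxx /=.
by case: (k < g ord0)%N; case: (nat_of_ord (g ord_max) == n); case: (increasing g).
Qed.

Lemma chain_formulaE p r M n k : (r < M)%N -> chain_formula p r M n k = chain_sum p r n k.
Proof.
elim: p r k => [|p IH] r k lt_rM; first exact: chain_formula0.
have [lt_kn|le_nk] := ltnP k n.+1; last first.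
  rewrite chain_sum_eq0; last by lia.
  by apply: big1 => j /andP[/eqP j0 _]; have := ltn_ord (j ord0); rewrite j0; lia.
rewrite chain_formulaS //=; apply: eq_bigr => m _; apply: eq_bigr => t _.
by rewrite IH //; apply: leq_ltn_trans (leq_subr t r) lt_rM.
Qed.

End ChainExpansion.

Lemma bellphi_dn_pow (K : numFieldType) (a : nat -> K) s n k :
  bellphi a s n k = dn_pow (a 1%N) (bellphi a 1) s n k.
Proof.
elim: s n k => [|s IH] n k; first by rewrite bellphi0 /dn_pow big_ord1 /= muln0 expr0 mulr1.
rewrite bellphiS dn_powS; under eq_bigr do rewrite IH.
rewrite (bigID (fun m : 'I_n.+1 => (k < m)%N)) /= addrC; congr (_ + _).
rewrite big_mkcond /= (sum_ord_nat1 (k := k)); last first.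
  move=> m ne_mk; case: ifPn => // le_mk; rewrite bellphi1_lt ?mulr0 //.
  by move: ne_mk le_mk; rewrite -ltnNge; lia.
case: ifP => lt_kn; first by rewrite inordK // ltnn /= bellphi1_diag mulrC.
rewrite /dn_pow big1 ?mulr0 // => p _; rewrite chain_sum_eq0 //.
by move/negbT: lt_kn; rewrite -leqNgt; lia.
Qed.

Theorem mainTheorem3 (R : realType) (a : nat -> R[i]) (s n k : nat) :
  a 1%N != 0 -> (k <= n)%N ->
  bellphi a s n k =
  \sum_(p < (minn s (n - k)).+1)
    \sum_(j : {ffun 'I_p.+1 -> 'I_n.+1} |
            [&& nat_of_ord (j ord0) == k, nat_of_ord (j ord_max) == n &
                [forall i1 : 'I_p.+1, forall i2 : 'I_p.+1,
                   (i1 < i2)%N ==> (j i1 < j i2)%N]])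
      ((\sum_(lam : {ffun 'I_p.+1 -> 'I_(s - p).+1} |
                (\sum_(i < p.+1) nat_of_ord (lam i))%N == (s - p)%N)
           (a 1%N) ^+ (\sum_(i < p.+1) j i * lam i)%N)
       * \prod_(i < p) bellphi a 1 (j (lift ord0 i)) (j (widen_ord (leqnSn p) i))).
Proof.
move=> _ le_kn; rewrite bellphi_dn_pow /dn_pow.
rewrite (@sum_ord_trunc _ (minn s (n - k)).+1 s.+1
  (fun p => chain_sum (a 1%N) (bellphi a 1) p (s - p) n k)) ?ltnS ?geq_minl //; last first.
  by move=> p /andP[lt_min lt_ps]; rewrite chain_sum_eq0 //; lia.
apply: eq_bigr => p _.
by rewrite -(chain_formulaE _ _ p n k (ltnSn (s - p))).
Qed.
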